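(* Let $G$ be a finite simple graph. If $\chi_c(G) < g(G)$, then $G$ is a cover graph.
   Context: $\chi_c(G)$ is the circular chromatic number of $G$ (the infimum of $k/d$ over all $(k,d)$-colorings, i.e. maps $c:V(G)\to\{0,\dots,k-1\}$ with $d\le |c(x)-c(y)|\le k-d$ for every edge $xy$). $g(G)$ is the girth of $G$ (length of a shortest cycle, $\infty$ if $G$ has no cycles). A graph is a cover graph if it is the underlying (undirected) graph of the Hasse diagram of some finite partially ordered set. *)

From HB Require Import structures.
From mathcomp Require Import all_boot all_order all_algebra.
From mathcomp Require Import classical_sets reals ereal.
Set Implicit Arguments. Unset Strict Implicit. Unset Printing Implicit Defensive.
Import Order.TTheory GRing.Theory Num.Theory.
Local Open Scope classical_set_scope.
Local Open Scope ring_scope.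

(* A finite simple graph: vertex set a finType T, edge relation e : rel T,
   assumed symmetric and irreflexive (hypotheses in the theorem). *)

Definition kd_coloring (T : finType) (e : rel T) (k d : nat) (c : T -> 'I_k) : Prop :=
  forall x y, e x y ->
    (d <= maxn (c x) (c y) - minn (c x) (c y) <= k - d)%N.

Definition circ_chrom (R : realType) (T : finType) (e : rel T) : \bar R :=
  ereal_inf [set r : \bar R | exists k d : nat, [/\ (0 < k)%N, (0 < d)%N,
               (exists c : T -> 'I_k, @kd_coloring T e k d c) &
               r = ((k%:R / d%:R : R)%:E)] ].

Definition has_cycle_of_length (T : finType) (e : rel T) (n : nat) : Prop :=
  (3 <= n)%N /\ exists f : 'I_n -> T, injective f /\ forall i : 'I_n, e (f i) (f (ordS i)).

(* Girth: length of a shortest cycle, +oo if there is no cycle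
   (ereal_inf of the empty set is +oo). *)
Definition girth (R : realType) (T : finType) (e : rel T) : \bar R :=
  ereal_inf [set ((n%:R : R)%:E) | n in [set n : nat | has_cycle_of_length e n]].

Definition partial_order (T : Type) (le : T -> T -> Prop) : Prop :=
  [/\ (forall x, le x x),
      (forall x y, le x y -> le y x -> x = y) &
      (forall x y z, le x y -> le y z -> le x z)].

Definition covers (T : Type) (le : T -> T -> Prop) (x y : T) : Prop :=
  le x y /\ x <> y /\ ~ (exists z, le x z /\ le z y /\ z <> x /\ z <> y).

Definition cover_graph (T : finType) (e : rel T) : Prop :=
  exists le : T -> T -> Prop, partial_order le /\
    forall x y, e x y <-> (covers le x y \/ covers le y x).

From mathcomp Require Import all_boot all_order all_algebra.
From mathcomp Require Import classical_sets reals ereal.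
From mathcomp Require Import zify.

(* Orient each edge of G from the smaller to the larger colour of a
   (k,d)-colouring c with k/d < g(G).  Colours increase by at least d along
   every directed path, so the orientation is acyclic and its reflexive
   transitive closure is a partial order.  If a directed path of length
   n >= 2 ran between the ends of an edge, it would close a cycle of length
   n + 1 >= g(G), while the colours would force d (n + 1) <= k, i.e.
   k/d >= n + 1 >= g(G).  Hence every arc is a cover relation of that order,
   and G is its cover graph. *)

Set Implicit Arguments. Unset Strict Implicit. Unset Printing Implicit Defensive.
Import Order.TTheory GRing.Theory Num.Theory.

Section RankedOrientation.
Variables (T : finType) (a : rel T) (rank : T -> nat).
Hypothesis rank_lt : forall x y, a x y -> (rank x < rank y)%N.

Lemma path_rank_gap x p : path a x p -> (rank x + size p <= rank (last x p))%N.
Proof.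
elim: p x => [|y p IHp] x /=; first by rewrite addn0.
by case/andP=> /rank_lt lt_xy /IHp; lia.
Qed.

Lemma path_rank_lt x p : path a x p -> (0 < size p)%N -> (rank x < rank (last x p))%N.
Proof. by move/path_rank_gap; lia. Qed.

Lemma path_uniq x p : path a x p -> uniq (x :: p).
Proof.
move=> xp; apply: (map_uniq (f := rank)); apply: (sorted_uniq ltn_trans ltnn).
by rewrite /= path_map; apply: sub_path xp => u v /rank_lt.
Qed.

Lemma connect_rank_le x y : connect a x y -> (rank x <= rank y)%N.
Proof.
case/connectP=> p /path_rank_gap + ->; lia.
Qed.

Lemma connect_rank_lt x y : connect a x y -> x != y -> (rank x < rank y)%N.
Proof.
case/connectP=> [[|z p] xp -> ]; first by rewrite eqxx.
by move=> _; apply: path_rank_lt.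
Qed.

Lemma partial_order_connect : partial_order (connect a).
Proof.
split=> [x | x y xy yx | x y z]; [exact: connect0 | | exact: connect_trans].
apply/eqP; apply: contraT => neq_xy.
by have := connect_rank_lt xy neq_xy; have := connect_rank_le yx; lia.
Qed.

Hypothesis no_long_chord :
  forall x p, path a x p -> a x (last x p) -> (size p <= 1)%N.

Lemma covers_connect x y : covers (connect a) x y <-> a x y.
Proof.
split=> [[/connectP[p xp ->{y}] [neq_xl no_between]] | axy].
  case: p xp neq_xl no_between => [_ [] //|z [|t p]] /= /andP[axz pz] // _.
  case; exists z; split; first exact: connect1.
  split; first by apply/connectP; exists (t :: p).
  split; first by move=> eq_zx; have := rank_lt axz; rewrite eq_zx ltnn.
  by move=> eq_zl; have := path_rank_lt (p := t :: p) pz isT; rewrite /= -eq_zl ltnn.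
split; first exact: connect1.
split; first by move=> eq_xy; have := rank_lt axy; rewrite eq_xy ltnn.
case=> z [/connectP[p xp zE] [/connectP[q zq yE] [neq_zx neq_zy]]].
have p_gt0 : (0 < size p)%N by case: p {xp} zE neq_zx => //= ->.
have q_gt0 : (0 < size q)%N by case: q {zq} yE neq_zy => //= <-.
have := no_long_chord (x := x) (p := p ++ q).
rewrite cat_path xp -zE zq last_cat -zE -yE axy size_cat => /(_ isT isT).
lia.
Qed.

End RankedOrientation.

Lemma cover_graph_of_orientation (T : finType) (e a : rel T) (rank : T -> nat) :
  (forall x y, a x y -> rank x < rank y)%N ->
  (forall x p, path a x p -> a x (last x p) -> size p <= 1)%N ->
  (forall x y, e x y = a x y || a y x) ->
  cover_graph e.
Proof.
move=> rank_lt no_long_chord eE; exists (connect a).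
split; first exact: partial_order_connect rank_lt.
by move=> x y; rewrite eE !(covers_connect rank_lt no_long_chord); split => /orP.
Qed.

Section ColourOrientation.
Variables (T : finType) (e : rel T) (k d : nat) (c : T -> 'I_k).
Hypothesis c_col : kd_coloring e d c.

Definition colour_arc : rel T := fun x y => e x y && (c x < c y)%N.

Lemma colour_arc_lt x y : colour_arc x y -> (c x < c y)%N.
Proof. by case/andP. Qed.

Lemma colour_path_gap x p :
  path colour_arc x p -> (c x + d * size p <= c (last x p))%N.
Proof.
elim: p x => [|y p IHp] x /=; first by rewrite muln0 addn0.
case/andP=> /andP[exy lt_xy] /IHp; have := c_col exy; rewrite mulnS; lia.
Qed.

Lemma colour_chord_bound x p :
  path colour_arc x p -> e x (last x p) -> (d * (size p).+1 <= k)%N.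
Proof.
move=> /colour_path_gap gap /c_col; rewrite mulnS; lia.
Qed.

Hypothesis e_sym : symmetric e.

Lemma colour_path_cycle x p :
  path colour_arc x p -> e x (last x p) -> (2 <= size p)%N ->
  has_cycle_of_length e (size p).+1.
Proof.
move=> xp ex_last p_ge2; split=> //.
exists (fun i : 'I_(size p).+1 => nth x (x :: p) i); split.
  have xp_uniq := path_uniq colour_arc_lt xp.
  by move=> i j /eqP; rewrite nth_uniq // => /eqP/val_inj.
move=> i; have [lt_ip | ge_ip] := ltnP i (size p).
  by rewrite /= modn_small //; case/andP: (pathP x xp i lt_ip).
have i_eq : nat_of_ord i = size p by have := ltn_ord i; lia.
rewrite /= i_eq modnn /=.
by have /= -> := nth_last x (x :: p); rewrite e_sym.
Qed.

Lemma edge_colour_arc (d_gt0 : (0 < d)%N) x y :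
  e x y = colour_arc x y || colour_arc y x.
Proof.
rewrite /colour_arc (e_sym y x); case exy: (e x y) => //=.
apply/esym; rewrite -neq_ltn; apply/eqP => eq_c.
by have := @c_col x y exy; rewrite eq_c maxnn minnn subnn leqn0 (gtn_eqF d_gt0).
Qed.

End ColourOrientation.

Local Open Scope ereal_scope.

Theorem theorem14 (R : realType) (T : finType) (e : rel T)
  (e_sym : symmetric e) (e_irr : irreflexive e) :
  circ_chrom R e < girth R e -> cover_graph e.
Proof.
case/ereal_inf_lt=> _ [k [d [_ d_gt0 [c c_col] ->]]] lt_kd_girth.
apply: (cover_graph_of_orientation (a := colour_arc e c) (rank := fun x => c x)).
- exact: colour_arc_lt.
- move=> x p xp /andP[ex_last _]; rewrite leqNgt; apply/negP => p_ge2.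
  have girth_le : girth R e <= ((size p).+1%:R : R)%:E.
    apply: ereal_inf_lbound; exists (size p).+1 => //.
    exact: (colour_path_cycle e_sym xp ex_last p_ge2).
  move: (lt_le_trans lt_kd_girth girth_le).
  rewrite lte_fin ltr_pdivrMr ?ltr0n // -natrM ltr_nat mulnC ltnNge.
  by rewrite (colour_chord_bound c_col xp ex_last).
- exact: edge_colour_arc c_col e_sym d_gt0.
Qed.
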